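(* Consider the 2-node network game with market maker payoff $\pi^M=W_{con}$. Suppose $a_1=a_2=a>0$, $c_1=c_2=c>0$, $b_1,b_2>0$ with $1<b_1/b_2\le 3$, and the line capacity $f_{12}$ satisfies $$\frac{a}{3b_1+2c}<f_{12}<\min\Big\{\frac{a}{b_2+2c},\ \frac{a}{b_1},\ f_0\Big\},$$ where $$f_0=\frac{ab_2\big[b_1+b_2+c(3-b_1/b_2)\big]}{b_1b_2(b_1+b_2)+b_1(b_1+5b_2)c+2(b_1+b_2)c^2}.$$ Then the game has no GNE.
   Context: 2-node network game. There are generators $G_1,G_2$. Generator $k$ chooses $q_k\ge 0$ and has profit $\pi^G_k=q_kp_k(q_k+r_k)-c_kq_k^2$, where $p_k(d)=a_k-b_kd$. The market maker chooses $r\in\mathbb{R}$ and sets $r_1=r$, $r_2=-r$, subject to $-q_1\le r\le q_2$ and $-f_{12}\le r\le f_{12}$. Node $k$ receives $q_k+r_k$. Consumer surplus objective. The market maker maximizes $$W_{con}(q,r)=\sum_{k=1}^2\Big(\int_0^{q_k+r_k}p_k(w)\,dw-(q_k+r_k)p_k(q_k+r_k)\Big).$$ GNE. A triple $(q_1^*,q_2^*,r^* )$ with $r^*$ feasible given $q^*$ is a GNE if both of the following hold: - each $q_k^*$ maximizes $\pi^G_k$ over $q_k\ge0$, given the other generator's quantity and $r^*$; - $r^*$ maximizes $W_{con}(q^*,\cdot)$ over the feasible set determined by $q^*$. *)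

From Stdlib Require Import Reals Lra.
Open Scope R_scope.

Definition price (a b d : R) : R := a - b * d.

Definition gen_profit (a b c q r : R) : R :=
  q * price a b (q + r) - c * q ^ 2.

(* Consumer surplus at one node with consumption d:
   int_0^d p(w) dw - d p(d), where int_0^d (a - b w) dw = a d - b d^2/2. *)
Definition node_cs (a b d : R) : R :=
  (a * d - b * d ^ 2 / 2) - d * price a b d.

(* W_con(q, r) with r_1 = r, r_2 = -r. *)
Definition W_con (a1 b1 a2 b2 q1 q2 r : R) : R :=
  node_cs a1 b1 (q1 + r) + node_cs a2 b2 (q2 - r).

Definition mm_feasible (f12 q1 q2 r : R) : Prop :=
  - q1 <= r /\ r <= q2 /\ - f12 <= r /\ r <= f12.

Definition is_GNE (a1 b1 c1 a2 b2 c2 f12 q1 q2 r : R) : Prop :=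
  0 <= q1 /\ 0 <= q2 /\ mm_feasible f12 q1 q2 r /\
  (forall q1', 0 <= q1' -> gen_profit a1 b1 c1 q1' r <= gen_profit a1 b1 c1 q1 r) /\
  (forall q2', 0 <= q2' -> gen_profit a2 b2 c2 q2' (- r) <= gen_profit a2 b2 c2 q2 (- r)) /\
  (forall r', mm_feasible f12 q1 q2 r' ->
     W_con a1 b1 a2 b2 q1 q2 r' <= W_con a1 b1 a2 b2 q1 q2 r).

Definition f0 (a b1 b2 c : R) : R :=
  a * b2 * (b1 + b2 + c * (3 - b1 / b2)) /
  (b1 * b2 * (b1 + b2) + b1 * (b1 + 5 * b2) * c + 2 * (b1 + b2) * c ^ 2).

(* W_con is a strictly convex function of the flow r, so the market maker always sits at an
   end of the feasible interval.  Since b1 > b2, sending goods towards node 1 raises consumer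
   surplus: if node 2's whole output fits on the line the maker exports all of it, and then
   q2 = a/(b2 + 2c) exceeds the capacity; otherwise a flow r <= 0 is beaten by r = f12.  At
   r = f12 the generators' best responses are explicit, and f12 < f0 is exactly the condition
   under which the reverse extreme r = -q1 yields more surplus. *)
From Stdlib Require Import Reals Lra Psatz.
Open Scope R_scope.

Lemma Rlt_of_div_lt x y z : 0 < y -> x / y < z -> x < z * y.
Proof.
  intros Hy H. apply (Rmult_lt_compat_r y) in H; [|exact Hy].
  now replace (x / y * y) with x in H by (field; lra).
Qed.

Lemma Rlt_of_lt_div x y z : 0 < y -> z < x / y -> z * y < x.
Proof.
  intros Hy H. apply (Rmult_lt_compat_r y) in H; [|exact Hy].
  now replace (x / y * y) with x in H by (field; lra).
Qed.

Lemma W_con_eq a1 b1 a2 b2 q1 q2 r :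
  W_con a1 b1 a2 b2 q1 q2 r = b1 * (q1 + r) ^ 2 / 2 + b2 * (q2 - r) ^ 2 / 2.
Proof. unfold W_con, node_cs, price. field. Qed.

Lemma W_con_sub a1 b1 a2 b2 q1 q2 r r' :
  W_con a1 b1 a2 b2 q1 q2 r' - W_con a1 b1 a2 b2 q1 q2 r =
  (r' - r) / 2 * (2 * (b1 * q1 - b2 * q2) + (b1 + b2) * (r + r')).
Proof. rewrite !W_con_eq. field. Qed.

Lemma W_con_midpoint a1 b1 a2 b2 q1 q2 r t :
  W_con a1 b1 a2 b2 q1 q2 (r + t) + W_con a1 b1 a2 b2 q1 q2 (r - t)
  - 2 * W_con a1 b1 a2 b2 q1 q2 r = (b1 + b2) * t ^ 2.
Proof. rewrite !W_con_eq. field. Qed.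

Lemma W_con_argmax_endpoint a1 b1 a2 b2 f q1 q2 r :
  0 < b1 + b2 -> mm_feasible f q1 q2 r ->
  (forall r', mm_feasible f q1 q2 r' -> W_con a1 b1 a2 b2 q1 q2 r' <= W_con a1 b1 a2 b2 q1 q2 r) ->
  r = - q1 \/ r = q2 \/ r = - f \/ r = f.
Proof.
  intros Hb [F1 [F2 [F3 F4]]] Hmax.
  destruct (Req_dec r (- q1)) as [|N1]; [now left|].
  destruct (Req_dec r q2) as [|N2]; [now right; left|].
  destruct (Req_dec r (- f)) as [|N3]; [now right; right; left|].
  destruct (Req_dec r f) as [|N4]; [now right; right; right|].
  exfalso.
  set (t := Rmin (Rmin (q2 - r) (f - r)) (Rmin (r + q1) (r + f))).
  assert (Ht : 0 < t) by (unfold t; repeat apply Rmin_glb_lt; lra).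
  assert (Hbounds : t <= q2 - r /\ t <= f - r /\ t <= r + q1 /\ t <= r + f).
  { unfold t. pose proof (Rmin_l (Rmin (q2 - r) (f - r)) (Rmin (r + q1) (r + f))).
    pose proof (Rmin_r (Rmin (q2 - r) (f - r)) (Rmin (r + q1) (r + f))).
    pose proof (Rmin_l (q2 - r) (f - r)). pose proof (Rmin_r (q2 - r) (f - r)).
    pose proof (Rmin_l (r + q1) (r + f)). pose proof (Rmin_r (r + q1) (r + f)).
    lra. }
  pose proof (Hmax (r + t) ltac:(unfold mm_feasible; lra)).
  pose proof (Hmax (r - t) ltac:(unfold mm_feasible; lra)).
  pose proof (W_con_midpoint a1 b1 a2 b2 q1 q2 r t).
  assert (0 < (b1 + b2) * t ^ 2) by (apply Rmult_lt_0_compat; [lra | apply pow_lt; lra]).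
  lra.
Qed.

Lemma W_con_argmax_full_export a1 b1 a2 b2 f q1 q2 r :
  0 <= b2 -> b2 < b1 -> q2 <= f -> mm_feasible f q1 q2 r ->
  (forall r', mm_feasible f q1 q2 r' -> W_con a1 b1 a2 b2 q1 q2 r' <= W_con a1 b1 a2 b2 q1 q2 r) ->
  r = q2.
Proof.
  intros Hb2 Hb Hq2 [F1 [F2 [F3 F4]]] Hmax.
  destruct (Rle_lt_or_eq_dec r q2 F2) as [Hlt|]; [exfalso|assumption].
  pose proof (Hmax q2 ltac:(unfold mm_feasible; lra)).
  pose proof (W_con_sub a1 b1 a2 b2 q1 q2 r q2) as Hsub.
  replace (2 * (b1 * q1 - b2 * q2) + (b1 + b2) * (r + q2))
    with (2 * b1 * (q1 + r) + (b1 - b2) * (q2 - r)) in Hsub by ring.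
  assert (0 < (q2 - r) / 2 * (2 * b1 * (q1 + r) + (b1 - b2) * (q2 - r))).
  { apply Rmult_lt_0_compat; [lra|].
    assert (0 <= b1 * (q1 + r)) by (apply Rmult_le_pos; lra).
    assert (0 < (b1 - b2) * (q2 - r)) by (apply Rmult_lt_0_compat; lra).
    lra. }
  lra.
Qed.

Lemma W_con_argmax_capacity a1 b1 a2 b2 f q1 q2 r :
  b2 * q2 < b1 * q1 -> 0 <= b1 + b2 -> f <= q2 -> mm_feasible f q1 q2 r ->
  (forall r', mm_feasible f q1 q2 r' -> W_con a1 b1 a2 b2 q1 q2 r' <= W_con a1 b1 a2 b2 q1 q2 r) ->
  r = f.
Proof.
  intros Hq Hb Hfq2 [F1 [F2 [F3 F4]]] Hmax.
  destruct (Rle_lt_or_eq_dec r f F4) as [Hlt|]; [exfalso|assumption].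
  pose proof (Hmax f ltac:(unfold mm_feasible; lra)).
  pose proof (W_con_sub a1 b1 a2 b2 q1 q2 r f) as Hsub.
  assert (0 < (f - r) / 2 * (2 * (b1 * q1 - b2 * q2) + (b1 + b2) * (r + f))).
  { apply Rmult_lt_0_compat; [lra|]. nra. }
  lra.
Qed.

Lemma gen_profit_argmax a b c q r :
  0 < b -> 0 < c -> 0 <= a - b * r ->
  (forall q', 0 <= q' -> gen_profit a b c q' r <= gen_profit a b c q r) ->
  2 * (b + c) * q = a - b * r.
Proof.
  intros Hb Hc Hm Hmax.
  set (qs := (a - b * r) / (2 * (b + c))).
  assert (Hqs : 2 * (b + c) * qs = a - b * r) by (unfold qs; field; lra).
  assert (Hgap : gen_profit a b c qs r - gen_profit a b c q r = (b + c) * (q - qs) ^ 2).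
  { unfold gen_profit, price. replace a with (2 * (b + c) * qs + b * r) by lra. ring. }
  assert (Hqs0 : 0 <= qs) by (unfold qs; apply Rmult_le_pos; [lra | apply Rlt_le, Rinv_0_lt_compat; lra]).
  pose proof (Hmax qs Hqs0).
  assert (Hsq : (q - qs) ^ 2 = 0).
  { apply Rle_antisym; [|apply pow2_ge_0].
    apply (Rmult_le_reg_l (b + c)); lra. }
  destruct (Req_dec (q - qs) 0) as [Hz|Hnz]; [now replace q with qs by lra|].
  now destruct (pow_nonzero _ 2 Hnz).
Qed.

(* b1/(b1 + c) > b2/(b2 + c), and a non-positive flow only reinforces the gap. *)
Lemma best_responses_nonpos_flow a c b1 b2 q1 q2 r :
  0 < a -> 0 < c -> 0 < b2 -> b2 < b1 -> r <= 0 ->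
  2 * (b1 + c) * q1 = a - b1 * r -> 2 * (b2 + c) * q2 = a + b2 * r ->
  b2 * q2 < b1 * q1.
Proof.
  intros Ha Hc Hb2 Hb Hr E1 E2.
  apply (Rmult_lt_reg_l (2 * (b1 + c) * (b2 + c))); [nra|].
  replace (2 * (b1 + c) * (b2 + c) * (b2 * q2)) with (b2 * (b1 + c) * (2 * (b2 + c) * q2)) by ring.
  replace (2 * (b1 + c) * (b2 + c) * (b1 * q1)) with (b1 * (b2 + c) * (2 * (b1 + c) * q1)) by ring.
  rewrite E1, E2.
  assert (0 < a * c * (b1 - b2)) by (repeat apply Rmult_lt_0_compat; lra).
  assert (0 <= - r * (b1 * b1 * (b2 + c) + b2 * b2 * (b1 + c))) by (apply Rmult_le_pos; nra).
  nra.
Qed.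

Lemma f0_eq a b1 b2 c : b2 <> 0 ->
  f0 a b1 b2 c = a * (b1 * b2 + b2 ^ 2 + 3 * b2 * c - b1 * c) /
    (b1 * b2 * (b1 + b2) + b1 * (b1 + 5 * b2) * c + 2 * (b1 + b2) * c ^ 2).
Proof. intros Hb2. unfold f0. f_equal. field. exact Hb2. Qed.

(* Under the best responses to r = f, 2 (b1 + c) (b2 + c) (W(-q1) - W(f)) / (q1 + f) is
   a (b1 b2 + b2^2 + 3 b2 c - b1 c) - f (denominator of f0): this is where f0 comes from. *)
Lemma W_con_lt_reverse_flow a c b1 b2 f q1 q2 :
  0 < c -> 0 < b2 -> b2 < b1 -> 0 < q1 + f ->
  f * (b1 * b2 * (b1 + b2) + b1 * (b1 + 5 * b2) * c + 2 * (b1 + b2) * c ^ 2)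
    < a * (b1 * b2 + b2 ^ 2 + 3 * b2 * c - b1 * c) ->
  2 * (b1 + c) * q1 = a - b1 * f -> 2 * (b2 + c) * q2 = a + b2 * f ->
  W_con a b1 a b2 q1 q2 f < W_con a b1 a b2 q1 q2 (- q1).
Proof.
  intros Hc Hb2 Hb Hq Hf E1 E2.
  set (K := 2 * b2 * (q2 - f) - (b1 - b2) * (q1 + f)).
  assert (HK : 2 * (b1 + c) * (b2 + c) * K =
    a * (b1 * b2 + b2 ^ 2 + 3 * b2 * c - b1 * c)
    - f * (b1 * b2 * (b1 + b2) + b1 * (b1 + 5 * b2) * c + 2 * (b1 + b2) * c ^ 2)).
  { transitivity (2 * b2 * (b1 + c) * (2 * (b2 + c) * q2) - (b1 - b2) * (b2 + c) * (2 * (b1 + c) * q1)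
                  - 2 * (b1 + c) * (b2 + c) * (2 * b2 * f + (b1 - b2) * f));
      [unfold K; ring|].
    rewrite E1, E2. ring. }
  assert (HKpos : 0 < K).
  { apply (Rmult_lt_reg_l (2 * (b1 + c) * (b2 + c))); [nra|]. lra. }
  pose proof (W_con_sub a b1 a b2 q1 q2 f (- q1)) as Hsub.
  replace ((- q1 - f) / 2 * (2 * (b1 * q1 - b2 * q2) + (b1 + b2) * (f + - q1)))
    with ((q1 + f) / 2 * K) in Hsub by (unfold K; field).
  assert (0 < (q1 + f) / 2 * K) by (apply Rmult_lt_0_compat; lra).
  lra.
Qed.

Theorem lemma1 (a c b1 b2 f12 : R) :
  0 < a -> 0 < c -> 0 < b1 -> 0 < b2 ->
  1 < b1 / b2 -> b1 / b2 <= 3 ->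
  a / (3 * b1 + 2 * c) < f12 ->
  f12 < a / (b2 + 2 * c) -> f12 < a / b1 -> f12 < f0 a b1 b2 c ->
  ~ (exists q1 q2 r, is_GNE a b1 c a b2 c f12 q1 q2 r).
Proof.
  intros Ha Hc Hb1 Hb2 Hratio _ Hlow Hup2 Hup1 Hupf0
    [q1 [q2 [r [Hq1 [Hq2 [Hfeas [Hbr1 [Hbr2 Hmm]]]]]]]].
  pose proof Hfeas as [F1 [F2 [F3 F4]]].
  assert (Hb : b2 < b1) by (apply Rlt_of_lt_div in Hratio; lra).
  assert (Hf : 0 < f12).
  { assert (0 < a / (3 * b1 + 2 * c)) by (apply Rdiv_lt_0_compat; lra). lra. }
  apply Rlt_of_div_lt in Hlow; [|lra].
  apply Rlt_of_lt_div in Hup2; [|lra].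
  apply Rlt_of_lt_div in Hup1; [|lra].
  rewrite f0_eq in Hupf0; [|lra].
  apply Rlt_of_lt_div in Hupf0;
    [|repeat apply Rplus_lt_0_compat; repeat apply Rmult_lt_0_compat; try apply pow_lt; lra].
  assert (E1 : 2 * (b1 + c) * q1 = a - b1 * r) by (apply gen_profit_argmax; auto; nra).
  assert (E2 : 2 * (b2 + c) * q2 = a + b2 * r).
  { replace (a + b2 * r) with (a - b2 * - r) by ring. apply gen_profit_argmax; auto; nra. }
  destruct (Rle_lt_dec q2 f12) as [Hq2f|Hfq2].
  - pose proof (W_con_argmax_full_export a b1 a b2 f12 q1 q2 r ltac:(lra) Hb Hq2f Hfeas Hmm).
    subst r. nra.
  - assert (Hr : r <= 0 \/ r = f12).
    { destruct (W_con_argmax_endpoint a b1 a b2 f12 q1 q2 r ltac:(lra) Hfeas Hmm)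
        as [|[|[|]]]; lra. }
    destruct Hr as [Hr | ->].
    + assert (Hcmp : b2 * q2 < b1 * q1)
        by (apply (best_responses_nonpos_flow a c b1 b2 q1 q2 r); auto; lra).
      pose proof (W_con_argmax_capacity a b1 a b2 f12 q1 q2 r Hcmp ltac:(lra) ltac:(lra) Hfeas Hmm).
      lra.
    + assert (Hq1f : q1 <= f12) by nra.
      pose proof (W_con_lt_reverse_flow a c b1 b2 f12 q1 q2 Hc Hb2 Hb ltac:(lra) Hupf0 E1 E2).
      pose proof (Hmm (- q1) ltac:(unfold mm_feasible; lra)). lra.
Qed.
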